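(* Let $K$ be a (not necessarily associative) ring with identity and $L$ a commutative associative ring with identity, and let $q\colon K\to L$ be a multiplicative quadratic map with $f(a,b)=q(a+b)-q(a)-q(b)$. Let $F$ be a subring of $L$ such that $K$ is an $F$-algebra, $q$ is $F$-quadratic, and every finitely generated $F$-submodule of $K$ is a free $F$-module. Let $\tilde K=L\otimes_F K$ (an $L$-algebra with $(\lambda\otimes a)(\mu\otimes b)=\lambda\mu\otimes ab$), write $\lambda a$ for $\lambda\otimes a$, and define $\tilde q\colon\tilde K\to L$ by $$\tilde q\Big(\sum_{i=1}^n\lambda_i a_i\Big)=\sum_{i=1}^n\lambda_i^2q(a_i)+\sum_{1\le i<j\le n}\lambda_i\lambda_j f(a_i,a_j)$$ for $a_i\in K$, $\lambda_i\in L$. Then $\tilde q$ is well defined and is a multiplicative $L$-quadratic map.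
   Context: A map $q\colon K\to L$ between rings with identity is called a multiplicative quadratic map if (i) $q(ab)=q(a)q(b)$ for all $a,b\in K$; (ii) $q(n\cdot 1_K)=n^2\cdot 1_L$ for all $n\in\mathbb{Z}$; (iii) the map $f\colon K\times K\to L$, $f(a,b)=q(a+b)-q(a)-q(b)$, is biadditive. If $F$ is a commutative associative ring such that $K$ and $L$ are $F$-algebras, $q$ is called $F$-quadratic if $f$ is $F$-bilinear and $q(\lambda a)=\lambda^2q(a)$ for all $a\in K$, $\lambda\in F$. *)

From HB Require Import structures.
From mathcomp Require Import all_boot all_order all_algebra.
Set Implicit Arguments. Unset Strict Implicit. Unset Printing Implicit Defensive.
Import Order.TTheory GRing.Theory Num.Theory.
Local Open Scope ring_scope.

Definition nonassoc_ring (K : zmodType) (mulK : K -> K -> K) (oneK : K) : Prop :=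
  [/\ forall a b c, mulK (a + b) c = mulK a c + mulK b c,
      forall a b c, mulK a (b + c) = mulK a b + mulK a c,
      forall a, mulK oneK a = a &
      forall a, mulK a oneK = a].

Definition qpolar (K : zmodType) (L : zmodType) (q : K -> L) (a b : K) : L :=
  q (a + b) - q a - q b.

Definition mult_quadratic (K : zmodType) (mulK : K -> K -> K) (oneK : K)
    (L : pzRingType) (q : K -> L) : Prop :=
  [/\ forall a b, q (mulK a b) = q a * q b,
      forall n : int, q (oneK *~ n) = (n ^+ 2)%:~R,
      forall a b c, qpolar q (a + b) c = qpolar q a c + qpolar q b c &
      forall a b c, qpolar q a (b + c) = qpolar q a b + qpolar q a c].

Definition falgebra_mul (F : pzRingType) (K : lmodType F) (mulK : K -> K -> K) : Prop :=
  forall (c : F) a b, mulK (c *: a) b = c *: mulK a b /\ mulK a (c *: b) = c *: mulK a b.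

Definition F_quadratic (F : pzRingType) (K : lmodType F) (L : pzRingType)
    (iota : F -> L) (q : K -> L) : Prop :=
  [/\ forall (c : F) a b, qpolar q (c *: a) b = iota c * qpolar q a b,
      forall (c : F) a b, qpolar q a (c *: b) = iota c * qpolar q a b &
      forall (c : F) a, q (c *: a) = iota c ^+ 2 * q a].

Definition L_quadratic (L : pzRingType) (T : lmodType L) (q : T -> L) : Prop :=
  [/\ forall (c : L) x y, qpolar q (c *: x) y = c * qpolar q x y,
      forall (c : L) x y, qpolar q x (c *: y) = c * qpolar q x y &
      forall (c : L) x, q (c *: x) = c ^+ 2 * q x].

Definition fg_span (F : pzRingType) (K : lmodType F) (n : nat) (s : 'I_n -> K) : K -> Prop :=
  fun x => exists c : 'I_n -> F, x = \sum_(i < n) c i *: s i.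

Definition free_submodule (F : pzRingType) (K : lmodType F) (P : K -> Prop) : Prop :=
  exists (m : nat) (b : 'I_m -> K),
    (forall i, P (b i)) /\
    (forall x, P x -> exists c : 'I_m -> F, x = \sum_(i < m) c i *: b i) /\
    (forall c : 'I_m -> F, \sum_(i < m) c i *: b i = 0 -> forall i, c i = 0).

Definition fg_submodules_free (F : pzRingType) (K : lmodType F) : Prop :=
  forall (n : nat) (s : 'I_n -> K), free_submodule (fg_span s).

(* (T, tens) is the tensor product L (x)_F K, where L is an F-module via iota:
   tens is F-balanced and biadditive, compatible with the L-action on T,
   and universal among F-balanced biadditive maps into abelian groups. *)
Definition is_tensor_product (F : pzRingType) (L : comPzRingType) (iota : F -> L)
    (K : lmodType F) (T : lmodType L) (tens : L -> K -> T) : Prop :=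
  [/\ forall l1 l2 a, tens (l1 + l2) a = tens l1 a + tens l2 a,
      forall l a b, tens l (a + b) = tens l a + tens l b,
      forall l (c : F) a, tens (l * iota c) a = tens l (c *: a),
      forall m l a, m *: tens l a = tens (m * l) a &
      forall (M : zmodType) (g : L -> K -> M),
        (forall l1 l2 a, g (l1 + l2) a = g l1 a + g l2 a) ->
        (forall l a b, g l (a + b) = g l a + g l b) ->
        (forall l (c : F) a, g (l * iota c) a = g l (c *: a)) ->
        exists h : T -> M,
          ((forall x y, h (x + y) = h x + h y) /\ (forall l a, h (tens l a) = g l a)) /\
          (forall h' : T -> M,
             (forall x y, h' (x + y) = h' x + h' y) ->
             (forall l a, h' (tens l a) = g l a) -> forall x, h' x = h x)].

(* An element sum_i l_i a_i of T = L (x)_F K is represented by a formal sum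
   r : seq (L * K).  To r we attach three invariants: its value tens_sum r in T,
   the value qval r of the formula defining q~, and its polar functional
   polar_fun r : b |-> sum_i l_i f(b, a_i).  Because
   qval (r ++ s) = qval r + qval s + pairing r s and the pairing only depends on
   the polar functionals, formal sums with equal invariants form an abelian
   group Mq under concatenation.  The map (l, a) |-> class of [:: (l, a)] is
   biadditive and F-balanced, so the universal property of T gives an additive
   h : T -> Mq with h (tens_sum r) = class of r.  Hence q~ (x) := qval of any
   representative of h x is well defined and given by the formula, and (using the
   uniqueness part of the universal property) every x : T is some tens_sum r.
   Finally the identities of qval under concatenation, scaling and products of
   formal sums (the latter from the polar identities of a multiplicative quadratic
   map) show that q~ is L-quadratic and multiplicative.  The argument does not
   need the freeness of finitely generated F-submodules of K. *)

From HB Require Import structures.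
From mathcomp Require Import all_boot all_order all_algebra.
From mathcomp Require Import ring.
From Stdlib Require Import ClassicalEpsilon.
Set Implicit Arguments. Unset Strict Implicit. Unset Printing Implicit Defensive.
Import Order.TTheory GRing.Theory Num.Theory.
Local Open Scope ring_scope.

Lemma qpolarC (K L : zmodType) (q : K -> L) a b : qpolar q a b = qpolar q b a.
Proof. by rewrite /qpolar [b + a]addrC addrAC. Qed.

Lemma qD (K L : zmodType) (q : K -> L) a b : q (a + b) = q a + q b + qpolar q a b.
Proof. by rewrite /qpolar -[q (a + b) - q a - q b]addrA -opprD addrC addNKr. Qed.

Section FormalSums.
Variables (L : comPzRingType) (K T : zmodType) (tens : L -> K -> T) (q : K -> L).
Local Notation f := (qpolar q).
Implicit Types (r s : seq (L * K)) (c : L) (b : K).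

Definition tens_sum r : T := \sum_(p <- r) tens p.1 p.2.

Definition polar_fun r b : L := \sum_(p <- r) p.1 * f b p.2.

(* The defining formula for the extended quadratic map:
   sum_i l_i^2 q(a_i) + sum_(i<j) l_i l_j f(a_i, a_j). *)
Fixpoint qval r : L :=
  if r is p :: r' then p.1 ^+ 2 * q p.2 + p.1 * polar_fun r' p.2 + qval r' else 0.

Definition pairing r s : L := \sum_(p <- r) p.1 * polar_fun s p.2.

Definition scale_fs c r := [seq (c * p.1, p.2) | p <- r].

Lemma tens_sum_cons p r : tens_sum (p :: r) = tens p.1 p.2 + tens_sum r.
Proof. exact: big_cons. Qed.

Lemma polar_fun_cons p r b : polar_fun (p :: r) b = p.1 * f b p.2 + polar_fun r b.
Proof. exact: big_cons. Qed.

Lemma pairing_cons p r s : pairing (p :: r) s = p.1 * polar_fun s p.2 + pairing r s.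
Proof. exact: big_cons. Qed.

Lemma tens_sum_seq1 l a : tens_sum [:: (l, a)] = tens l a.
Proof. exact: big_seq1. Qed.

Lemma polar_fun_seq1 l a b : polar_fun [:: (l, a)] b = l * f b a.
Proof. exact: big_seq1. Qed.

Lemma qval_seq1 l a : qval [:: (l, a)] = l ^+ 2 * q a.
Proof. by rewrite /= /polar_fun big_nil mulr0 !addr0. Qed.

Lemma pairing_seq1 l a m b : pairing [:: (l, a)] [:: (m, b)] = l * m * f a b.
Proof. by rewrite /pairing big_seq1 polar_fun_seq1 mulrA. Qed.

Lemma tens_sum_cat r s : tens_sum (r ++ s) = tens_sum r + tens_sum s.
Proof. exact: big_cat. Qed.

Lemma polar_fun_cat r s b : polar_fun (r ++ s) b = polar_fun r b + polar_fun s b.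
Proof. exact: big_cat. Qed.

Lemma pairing_catl r1 r2 s : pairing (r1 ++ r2) s = pairing r1 s + pairing r2 s.
Proof. exact: big_cat. Qed.

Lemma pairing_sym r s : pairing r s = pairing s r.
Proof.
rewrite /pairing /polar_fun; under eq_bigr do rewrite big_distrr.
rewrite exchange_big; apply: eq_bigr => p _; rewrite big_distrr.
by apply: eq_bigr => p' _ /=; rewrite qpolarC mulrCA.
Qed.

Lemma pairing_polar r s s' : polar_fun s =1 polar_fun s' -> pairing r s = pairing r s'.
Proof. by move=> e; apply: eq_bigr => p _; rewrite e. Qed.

Lemma pairing_catr r s1 s2 : pairing r (s1 ++ s2) = pairing r s1 + pairing r s2.
Proof. by rewrite !(pairing_sym r) pairing_catl. Qed.

Lemma qval_cat r s : qval (r ++ s) = qval r + qval s + pairing r s.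
Proof.
elim: r => [|p r IH] /=; first by rewrite /pairing big_nil add0r addr0.
by rewrite IH polar_fun_cat /pairing big_cons; ring.
Qed.

Lemma polar_fun_scale c r b : polar_fun (scale_fs c r) b = c * polar_fun r b.
Proof. by rewrite /polar_fun big_map big_distrr; apply: eq_bigr => p _ /=; rewrite mulrA. Qed.

Lemma qval_scale c r : qval (scale_fs c r) = c ^+ 2 * qval r.
Proof.
elim: r => [|p r IH] /=; first by rewrite mulr0.
by rewrite IH polar_fun_scale; ring.
Qed.

Lemma pairing_scalel c r s : pairing (scale_fs c r) s = c * pairing r s.
Proof. by rewrite /pairing big_map big_distrr; apply: eq_bigr => p _ /=; rewrite mulrA. Qed.

Lemma pairing_scaler c r s : pairing r (scale_fs c s) = c * pairing r s.
Proof. by rewrite pairing_sym pairing_scalel pairing_sym. Qed.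

Lemma pairing_diag r :
  (forall a, f a a = q a *+ 2) -> pairing r r = qval r *+ 2.
Proof.
move=> fdiag; elim: r => [|p r IH]; first by rewrite /pairing big_nil mul0rn.
rewrite pairing_cons polar_fun_cons (pairing_sym r) pairing_cons IH fdiag /=; ring.
Qed.

Lemma qval_ord n (lam : 'I_n -> L) (a : 'I_n -> K) :
  qval [seq (lam i, a i) | i <- enum 'I_n] =
  \sum_(i < n) lam i ^+ 2 * q (a i)
  + \sum_(i < n) \sum_(j < n | (i < j)%N) lam i * lam j * f (a i) (a j).
Proof.
elim: n lam a => [|n IH] lam a; first by rewrite enum_ord0 !big_ord0 addr0.
rewrite enum_ordSl /= -map_comp IH /polar_fun big_map big_enum /=.
rewrite !big_ord_recl (big_mkcond (fun j : 'I_n.+1 => (ord0 < j)%N)) big_ord_recl /=.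
have shift i : \sum_(j < n.+1 | (lift ord0 i < j)%N) lam (lift ord0 i) * lam j *
      f (a (lift ord0 i)) (a j) =
    \sum_(j < n | (i < j)%N) lam (lift ord0 i) * lam (lift ord0 j) *
      f (a (lift ord0 i)) (a (lift ord0 j)).
  by rewrite big_mkcond big_ord_recl /= add0r [RHS]big_mkcond.
under [X in _ = _ + (_ + X)]eq_bigr do rewrite shift.
rewrite big_distrr add0r /=.
under [X in _ = _ + (X + _)]eq_bigr do rewrite -mulrA.
ring.
Qed.

End FormalSums.

Lemma tens_sum_scale (L : comPzRingType) (K : zmodType) (T : lmodType L)
    (tens : L -> K -> T) (tens_scale : forall m l a, m *: tens l a = tens (m * l) a)
    c (r : seq (L * K)) :
  tens_sum tens (scale_fs c r) = c *: tens_sum tens r.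
Proof.
by rewrite /tens_sum big_map scaler_sumr; apply: eq_bigr => p _; rewrite tens_scale.
Qed.

Section ProductFormalSums.
Variables (L : comPzRingType) (K : zmodType) (mulK : K -> K -> K) (q : K -> L).
Hypotheses (mulKDl : forall a b c, mulK (a + b) c = mulK a c + mulK b c)
           (mulKDr : forall a b c, mulK a (b + c) = mulK a b + mulK a c)
           (qM : forall a b, q (mulK a b) = q a * q b)
           (qpolarDl : forall a b c, qpolar q (a + b) c = qpolar q a c + qpolar q b c)
           (qpolarDr : forall a b c, qpolar q a (b + c) = qpolar q a b + qpolar q a c).
Local Notation f := (qpolar q).
Local Notation polar_fun := (polar_fun q).
Local Notation qval := (qval q).
Local Notation pairing := (pairing q).
Implicit Types (r s : seq (L * K)) (p : L * K).

Lemma qpolar_mull a b b' : f (mulK a b) (mulK a b') = q a * f b b'.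
Proof. by rewrite /qpolar -mulKDr !qM; ring. Qed.

Lemma qpolar_mulr a a' b : f (mulK a b) (mulK a' b) = f a a' * q b.
Proof. by rewrite /qpolar -mulKDl !qM; ring. Qed.

Lemma qpolar_mul_cross a a' b b' :
  f (mulK a b) (mulK a' b') + f (mulK a b') (mulK a' b) = f a a' * f b b'.
Proof.
have := qM (a + a') (b + b').
rewrite mulKDl !mulKDr !(qD q) !qpolarDl !qpolarDr !qM !qpolar_mull !qpolar_mulr.
move/eqP; rewrite -subr_eq0 => /eqP E; apply/eqP; rewrite -subr_eq0 -[X in _ == X]E.
apply/eqP; ring.
Qed.

Definition lmul_fs p s := [seq (p.1 * p'.1, mulK p.2 p'.2) | p' <- s].
Definition mul_fs r s := [seq (p.1 * p'.1, mulK p.2 p'.2) | p <- r, p' <- s].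

Lemma lmul_fs_cons p p0 s :
  lmul_fs p (p0 :: s) = (p.1 * p0.1, mulK p.2 p0.2) :: lmul_fs p s.
Proof. by []. Qed.

Lemma mul_fs_cons p r s : mul_fs (p :: r) s = lmul_fs p s ++ mul_fs r s.
Proof. exact: allpairs_cons. Qed.

Lemma polar_fun_lmul p s b :
  polar_fun (lmul_fs p s) (mulK p.2 b) = p.1 * q p.2 * polar_fun s b.
Proof.
rewrite /polar_fun big_map big_distrr; apply: eq_bigr => p' _ /=.
by rewrite qpolar_mull; ring.
Qed.

Lemma qval_lmul p s : qval (lmul_fs p s) = p.1 ^+ 2 * q p.2 * qval s.
Proof.
elim: s => [|p' s IH] /=; first by rewrite mulr0.
by rewrite IH polar_fun_lmul qM; ring.
Qed.

Lemma pairing_lmul p p' s :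
  pairing (lmul_fs p s) (lmul_fs p' s) = p.1 * p'.1 * f p.2 p'.2 * qval s.
Proof.
elim: s => [|p0 s IH]; first by rewrite /pairing big_nil mulr0.
set B := p.1 * p0.1 * polar_fun (lmul_fs p' s) (mulK p.2 p0.2).
set C := p'.1 * p0.1 * polar_fun (lmul_fs p s) (mulK p'.2 p0.2).
(* The cross terms between the head p0 and the tail s combine by qpolar_mul_cross. *)
have cross : B + C = p.1 * p'.1 * f p.2 p'.2 * (p0.1 * polar_fun s p0.2).
  rewrite /B /C /polar_fun !big_map !big_distrr -big_split /=.
  apply: eq_bigr => p'' _ /=; rewrite (qpolarC _ (mulK p'.2 p0.2)).
  transitivity (p.1 * p'.1 * p0.1 * p''.1 *
    (f (mulK p.2 p0.2) (mulK p'.2 p''.2) + f (mulK p.2 p''.2) (mulK p'.2 p0.2))).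
    by ring.
  by rewrite qpolar_mul_cross; ring.
rewrite !lmul_fs_cons pairing_cons polar_fun_cons (pairing_sym _ (lmul_fs p s)).
rewrite pairing_cons (pairing_sym _ (lmul_fs p' s)) IH /= qpolar_mulr mulrDr -/B -/C.
by rewrite addrA -(addrA _ B) cross; ring.
Qed.

Lemma pairing_mul_fsr t r s :
  pairing t (mul_fs r s) = \sum_(p <- r) pairing t (lmul_fs p s).
Proof.
elim: r => [|p r IH]; first by rewrite big_nil pairing_sym /pairing big_nil.
by rewrite mul_fs_cons pairing_catr IH big_cons.
Qed.

Lemma qval_mul r s : qval (mul_fs r s) = qval r * qval s.
Proof.
elim: r => [|p r IH] /=; first by rewrite mul0r.
have cross : pairing (lmul_fs p s) (mul_fs r s) = p.1 * polar_fun r p.2 * qval s.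
  rewrite pairing_mul_fsr /polar_fun big_distrr big_distrl /=.
  by apply: eq_bigr => p0 _; rewrite pairing_lmul; ring.
by rewrite mul_fs_cons qval_cat qval_lmul IH cross; ring.
Qed.

End ProductFormalSums.

Section Extension.
Local Open Scope quotient_scope.
Variables (F L : comPzRingType) (iota : {rmorphism F -> L}) (K : lmodType F).
Variables (T : lmodType L) (tens : L -> K -> T) (q : K -> L).
Hypotheses (HT : is_tensor_product iota tens)
           (qpolarDr : forall a b c, qpolar q a (b + c) = qpolar q a b + qpolar q a c)
           (HqF : F_quadratic iota q).
Local Notation f := (qpolar q).
Local Notation tens_sum := (tens_sum tens).
Local Notation polar_fun := (polar_fun q).
Local Notation qval := (qval q).
Local Notation pairing := (pairing q).
Implicit Types (r s : seq (L * K)).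

(* f(a, a) = q(2 a) - 2 q(a) = 4 q(a) - 2 q(a), by F-homogeneity with c = 2. *)
Lemma qpolar_diag a : f a a = q a *+ 2.
Proof.
case: HqF => _ _ qZ; have := qZ 2%:R a; rewrite scaler_nat rmorph_nat.
by rewrite /qpolar => ->; ring.
Qed.

Definition same_inv r s : Prop :=
  [/\ tens_sum r = tens_sum s, qval r = qval s & polar_fun r =1 polar_fun s].
Definition same_invb r s : bool := excluded_middle_informative (same_inv r s).

Lemma same_invP r s : reflect (same_inv r s) (same_invb r s).
Proof. exact: sumboolP. Qed.

Lemma same_invb_refl : reflexive same_invb.
Proof. by move=> r; apply/same_invP. Qed.

Lemma same_invb_sym : symmetric same_invb.
Proof.
by move=> r s; apply/same_invP/same_invP => -[e1 e2 e3]; split=> // b; rewrite e3.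
Qed.

Lemma same_invb_trans : transitive same_invb.
Proof.
move=> s r t /same_invP[e1 e2 e3] /same_invP[e1' e2' e3']; apply/same_invP.
by split=> [||b]; [rewrite e1 | rewrite e2 | rewrite e3].
Qed.

Definition same_inv_rel := EquivRel same_invb same_invb_refl same_invb_sym same_invb_trans.

Definition Mq := {eq_quot same_inv_rel}.
HB.instance Definition _ := Choice.copy Mq {eq_quot same_inv_rel}.
Definition cls r : Mq := \pi_Mq r.

Lemma cls_repr (x : Mq) : cls (repr x) = x.
Proof. exact: reprK. Qed.

Lemma cls_eq r s : same_inv r s -> cls r = cls s.
Proof. by move=> e; apply/eqmodP/same_invP. Qed.

Lemma repr_cls r : same_inv (repr (cls r)) r.
Proof.
apply/same_invP; change (same_inv_rel (repr (cls r)) r).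
by apply/eqmodP; rewrite reprK.
Qed.

Lemma same_inv_cat r1 s1 r2 s2 :
  same_inv r1 s1 -> same_inv r2 s2 -> same_inv (r1 ++ r2) (s1 ++ s2).
Proof.
move=> [e1 e2 e3] [e1' e2' e3']; split=> [||b]; rewrite ?tens_sum_cat ?polar_fun_cat.
- by rewrite e1 e1'.
- rewrite !qval_cat e2 e2' (pairing_polar r1 e3') pairing_sym.
  by rewrite (pairing_polar s2 e3) pairing_sym.
- by rewrite e3 e3'.
Qed.

Definition zero_Mq : Mq := cls [::].
Definition add_Mq (x y : Mq) : Mq := cls (repr x ++ repr y).
Definition opp_Mq (x : Mq) : Mq := cls (scale_fs (-1) (repr x)).

Lemma add_cls r s : add_Mq (cls r) (cls s) = cls (r ++ s).
Proof. by apply: cls_eq; apply: same_inv_cat; apply: repr_cls. Qed.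

Lemma add_MqA : associative add_Mq.
Proof.
by move=> x y z; rewrite -[x]cls_repr -[y]cls_repr -[z]cls_repr !add_cls catA.
Qed.

Lemma add_MqC : commutative add_Mq.
Proof.
move=> x y; rewrite -[x]cls_repr -[y]cls_repr !add_cls; apply: cls_eq.
move: (repr x) (repr y) => r s; split=> [||b].
- by rewrite !tens_sum_cat addrC.
- by rewrite !qval_cat pairing_sym [qval r + _]addrC.
- by rewrite !polar_fun_cat addrC.
Qed.

Lemma add0_Mq : left_id zero_Mq add_Mq.
Proof. by move=> x; rewrite -[x]cls_repr add_cls. Qed.

(* (-1) r is an inverse of r: this uses tens(-l, a) = -tens(l, a) and
   pairing r r = 2 qval r. *)
Lemma addN_Mq : left_inverse zero_Mq opp_Mq add_Mq.
Proof.
have tens_scale : forall m l a, m *: tens l a = tens (m * l) a by case: HT.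
move=> x; rewrite /opp_Mq -{2}[x]cls_repr add_cls; apply: cls_eq.
move: (repr x) => r; split=> [||b]; rewrite ?tens_sum_cat ?qval_cat ?polar_fun_cat.
- by rewrite (tens_sum_scale tens_scale) scaleN1r addNr [RHS]big_nil.
- by rewrite pairing_scalel qval_scale (pairing_diag _ qpolar_diag) /=; ring.
- by rewrite polar_fun_scale mulN1r addNr [RHS]big_nil.
Qed.

HB.instance Definition _ := GRing.isZmodule.Build Mq add_MqA add_MqC add0_Mq addN_Mq.

Definition pure_cls l a : Mq := cls [:: (l, a)].

Lemma pure_cls_addl l1 l2 a : pure_cls (l1 + l2) a = pure_cls l1 a + pure_cls l2 a.
Proof.
have [tensDl _ _ _ _] := HT.
apply: esym; rewrite [_ + _]add_cls; apply: cls_eq.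
split=> [||b]; rewrite ?tens_sum_cat ?qval_cat ?polar_fun_cat.
- by rewrite !tens_sum_seq1 tensDl.
- by rewrite !qval_seq1 pairing_seq1 qpolar_diag; ring.
- by rewrite !polar_fun_seq1 mulrDl.
Qed.

Lemma pure_cls_addr l a b : pure_cls l (a + b) = pure_cls l a + pure_cls l b.
Proof.
have [_ tensDr _ _ _] := HT.
apply: esym; rewrite [_ + _]add_cls; apply: cls_eq.
split=> [||c]; rewrite ?tens_sum_cat ?qval_cat ?polar_fun_cat.
- by rewrite !tens_sum_seq1 tensDr.
- by rewrite !qval_seq1 pairing_seq1 (qD q); ring.
- by rewrite !polar_fun_seq1 -mulrDr -qpolarDr.
Qed.

Lemma pure_cls_balanced l c a : pure_cls (l * iota c) a = pure_cls l (c *: a).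
Proof.
have [_ _ tens_bal _ _] := HT; have [_ qpolarZr qZ] := HqF.
apply: cls_eq; split=> [||b].
- by rewrite !tens_sum_seq1 tens_bal.
- by rewrite !qval_seq1 qZ; ring.
- by rewrite !polar_fun_seq1 qpolarZr; ring.
Qed.

(* This is the well-definedness of q~. *)
Lemma tens_sum_lift :
  exists h : T -> Mq, (forall r, h (tens_sum r) = cls r) /\
                      (forall x, tens_sum (repr (h x)) = x).
Proof.
have [tensDl tensDr tens_bal _ univ] := HT.
have [h [[hD h_pure] _]] := univ Mq pure_cls pure_cls_addl pure_cls_addr pure_cls_balanced.
have h0 : h 0 = 0 by apply: (addrI (h 0)); rewrite -hD !addr0.
have h_sum r : h (tens_sum r) = cls r.
  elim: r => [|[l a] r IH]; first by rewrite [tens_sum _]big_nil h0.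
  by rewrite tens_sum_cons hD h_pure IH [_ + _]add_cls.
exists h; split=> // x.
have [id_T [_ uniq_id]] := univ T tens tensDl tensDr tens_bal.
pose k (y : Mq) := tens_sum (repr y).
have kD y z : k (y + z) = k y + k z.
  by rewrite /k -tens_sum_cat; have [-> _ _] := repr_cls (repr y ++ repr z).
have k_pure l a : k (h (tens l a)) = tens l a.
  rewrite h_pure /k; have [-> _ _] := repr_cls [:: (l, a)].
  by rewrite tens_sum_seq1.
have khD y z : k (h (y + z)) = k (h y) + k (h z) by rewrite hD kD.
have idD (y z : T) : id (y + z) = id y + id z by [].
transitivity (id_T x); first exact: uniq_id (k \o h) khD k_pure x.
exact: esym (uniq_id id idD (fun _ _ => erefl) x).
Qed.

Lemma tens_sum_surj x : exists r, x = tens_sum r.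
Proof. by have [h [_ hK]] := tens_sum_lift; exists (repr (h x)). Qed.

Lemma qext_exists : exists qt : T -> L, forall r, qt (tens_sum r) = qval r.
Proof.
have [h [h_sum _]] := tens_sum_lift.
exists (fun x => qval (repr (h x))) => r; rewrite h_sum.
by have [_ -> _] := repr_cls r.
Qed.

End Extension.

Section Transfer.
Variables (L : comPzRingType) (K : zmodType) (T : lmodType L).
Variables (tens : L -> K -> T) (q : K -> L) (qt : T -> L).
Hypotheses (tens_scale : forall m l a, m *: tens l a = tens (m * l) a)
           (qt_sum : forall r, qt (tens_sum tens r) = qval q r)
           (tens_sum_onto : forall x, exists r, x = tens_sum tens r).
Implicit Types (r s : seq (L * K)).

Lemma qpolar_tens_sum r s : qpolar qt (tens_sum tens r) (tens_sum tens s) = pairing q r s.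
Proof. by rewrite /qpolar -tens_sum_cat !qt_sum qval_cat; ring. Qed.

Lemma qext_L_quadratic : L_quadratic qt.
Proof.
split=> [c x y|c x y|c x].
- have [[r ->] [s ->]] := (tens_sum_onto x, tens_sum_onto y).
  by rewrite -tens_sum_scale // !qpolar_tens_sum pairing_scalel.
- have [[r ->] [s ->]] := (tens_sum_onto x, tens_sum_onto y).
  by rewrite -tens_sum_scale // !qpolar_tens_sum pairing_scaler.
- by have [r ->] := tens_sum_onto x; rewrite -tens_sum_scale // !qt_sum qval_scale.
Qed.

Variables (mulK : K -> K -> K) (oneK : K) (mulT : T -> T -> T).
Hypotheses (mulKDl : forall a b c, mulK (a + b) c = mulK a c + mulK b c)
           (mulKDr : forall a b c, mulK a (b + c) = mulK a b + mulK a c)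
           (qM : forall a b, q (mulK a b) = q a * q b) (q1 : q oneK = 1)
           (qpolarDl : forall a b c, qpolar q (a + b) c = qpolar q a c + qpolar q b c)
           (qpolarDr : forall a b c, qpolar q a (b + c) = qpolar q a b + qpolar q a c)
           (mulTDl : forall x y z, mulT (x + y) z = mulT x z + mulT y z)
           (mulTDr : forall x y z, mulT x (y + z) = mulT x y + mulT x z)
           (mulT_tens : forall l m a b, mulT (tens l a) (tens m b) = tens (l * m) (mulK a b)).

Lemma tens_sum_mul r s :
  tens_sum tens (mul_fs mulK r s) = mulT (tens_sum tens r) (tens_sum tens s).
Proof.
have mulT0 x : mulT x 0 = 0 by apply: (addrI (mulT x 0)); rewrite -mulTDr !addr0.
have mul0T x : mulT 0 x = 0 by apply: (addrI (mulT 0 x)); rewrite -mulTDl !addr0.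
elim: r => [|[l a] r IH]; first by rewrite [tens_sum _ [::]]big_nil mul0T.
rewrite mul_fs_cons tens_sum_cat IH tens_sum_cons mulTDl; congr (_ + _).
elim: s {IH} => [|[m b] s IHs]; first by rewrite [tens_sum _ [::]]big_nil mulT0.
by rewrite /lmul_fs map_cons !tens_sum_cons mulTDr -IHs mulT_tens.
Qed.

Lemma qext_mult_quadratic : mult_quadratic mulT (tens 1 oneK) qt.
Proof.
split=> [x y|n|x y z|x y z].
- have [[r ->] [s ->]] := (tens_sum_onto x, tens_sum_onto y).
  by rewrite -tens_sum_mul !qt_sum qval_mul.
- rewrite -scaler_int -(tens_sum_seq1 tens) -(tens_sum_scale tens_scale) qt_sum.
  by rewrite qval_scale qval_seq1 q1 expr1n !mulr1 rmorphXn.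
- have [[[r1 ->] [r2 ->]] [r3 ->]] := (tens_sum_onto x, tens_sum_onto y, tens_sum_onto z).
  by rewrite -tens_sum_cat !qpolar_tens_sum pairing_catl.
- have [[[r1 ->] [r2 ->]] [r3 ->]] := (tens_sum_onto x, tens_sum_onto y, tens_sum_onto z).
  by rewrite -tens_sum_cat !qpolar_tens_sum pairing_catr.
Qed.

End Transfer.

Theorem proposition2p3
  (F L : comPzRingType) (iota : {rmorphism F -> L}) (iota_inj : injective iota)
  (K : lmodType F) (mulK : K -> K -> K) (oneK : K)
  (HK : nonassoc_ring mulK oneK) (HKalg : falgebra_mul mulK)
  (q : K -> L) (Hq : mult_quadratic mulK oneK q) (HqF : F_quadratic iota q)
  (Hfree : fg_submodules_free K)
  (T : lmodType L) (tens : L -> K -> T) (HT : is_tensor_product iota tens)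
  (mulT : T -> T -> T)
  (HmulTl : forall x y z, mulT (x + y) z = mulT x z + mulT y z)
  (HmulTr : forall x y z, mulT x (y + z) = mulT x y + mulT x z)
  (HmulT : forall l m a b, mulT (tens l a) (tens m b) = tens (l * m) (mulK a b)) :
  exists qt : T -> L,
    [/\ forall (n : nat) (lam : 'I_n -> L) (a : 'I_n -> K),
          qt (\sum_(i < n) tens (lam i) (a i)) =
            \sum_(i < n) lam i ^+ 2 * q (a i)
            + \sum_(i < n) \sum_(j < n | (i < j)%N) lam i * lam j * qpolar q (a i) (a j),
        mult_quadratic mulT (tens 1 oneK) qt &
        L_quadratic qt].
Proof.
have [mulKDl mulKDr _ _] := HK.
have [qM q_int qpolarDl qpolarDr] := Hq.
have q1 : q oneK = 1 by have := q_int 1; rewrite mulr1z expr1n.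
have [_ _ _ tens_scale _] := HT.
have [qt qt_sum] := qext_exists HT qpolarDr HqF.
have onto := tens_sum_surj HT qpolarDr HqF.
exists qt; split.
- move=> n lam a; rewrite -qval_ord -qt_sum; congr qt.
  by rewrite /tens_sum big_map big_enum.
- exact: qext_mult_quadratic.
- exact: qext_L_quadratic.
Qed.
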